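(* Let $A$ be a real block tridiagonal matrix with square diagonal blocks $A_{11},\dots,A_{nn}$ ($n\ge2$), off-diagonal blocks $A_{i,i+1},A_{i+1,i}$ ($i=1,\dots,n-1$) and all other blocks zero. Suppose $A_{11}>0$, $A_{nn}>0$, and for every $i=1,\dots,n-1$ $$\begin{pmatrix}A_{ii}&2A_{i,i+1}\\2A_{i+1,i}&A_{i+1,i+1}\end{pmatrix}>0.$$ Then $A>0$.
   Context: For a real square (not necessarily symmetric) matrix $M$, $M>0$ means $\mathbf{y}^\top M\mathbf{y}>0$ for all nonzero real vectors $\mathbf{y}$. *)

From HB Require Import structures.
From mathcomp Require Import all_boot all_order all_algebra.
Set Implicit Arguments. Unset Strict Implicit. Unset Printing Implicit Defensive.
Import Order.TTheory GRing.Theory Num.Theory.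
Local Open Scope ring_scope.

Definition posmx (R : realFieldType) (m : nat) (M : 'M[R]_m) : Prop :=
  forall y : 'cV[R]_m, y != 0 -> 0 < (y^T *m M *m y) 0 0.

Definition blockmx (R : realFieldType) (n : nat) (d : 'I_n -> nat)
  (B : forall i j : 'I_n, 'M[R]_(d i, d j)) : 'M[R]_(\sum_(i < n) d i) :=
  \mxblock_(i < n, j < n) B i j.

Definition block_tridiag (R : realFieldType) (n : nat) (d : 'I_n -> nat)
  (B : forall i j : 'I_n, 'M[R]_(d i, d j)) : Prop :=
  forall i j : 'I_n, ((i.+1 < j)%N || (j.+1 < i)%N) -> B i j = 0.

From HB Require Import structures.
From mathcomp Require Import all_boot all_order all_algebra zify.
Set Implicit Arguments. Unset Strict Implicit. Unset Printing Implicit Defensive.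
Import Order.TTheory GRing.Theory Num.Theory.
Local Open Scope ring_scope.

(* Writing [y] in blocks [y_i] and [F i j = y_i^T A_ij y_j], tridiagonality
   gives [y^T A y = sum_i F i i + sum_i (F i i+1 + F i+1 i)].  Counting every
   diagonal term twice, [2 y^T A y] is the sum over [i < n-1] of the quadratic
   forms of the 2x2 block matrices of the hypothesis at [(y_i, y_i+1)], plus
   the end terms [F 1 1 + F n n].  All these terms are nonnegative, and the pair
   containing a nonzero block [y_i] contributes a positive one. *)

Definition mxform (R : pzRingType) m n (M : 'M[R]_(m, n)) (u : 'cV_m) (v : 'cV_n) : R :=
  (u^T *m M *m v) 0 0.

Lemma mxform0 (R : pzRingType) m n (u : 'cV[R]_m) (v : 'cV_n) : mxform 0 u v = 0.
Proof. by rewrite /mxform mulmx0 mul0mx mxE. Qed.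

Lemma mxformZ (R : comPzRingType) m n a (M : 'M[R]_(m, n)) u v :
  mxform (a *: M) u v = a * mxform M u v.
Proof. by rewrite /mxform -scalemxAr -scalemxAl mxE. Qed.

Lemma mxform_block (R : pzRingType) p q (A : 'M[R]_p) (X : 'M_(p, q)) Y C u v :
  mxform (block_mx A X Y C) (col_mx u v) (col_mx u v) =
  mxform A u u + mxform X u v + mxform Y v u + mxform C v v.
Proof.
rewrite /mxform tr_col_mx mul_row_block mul_row_col !mulmxDl !mxE.
by rewrite addrACA addrA.
Qed.

Lemma mxform_mxblock (R : pzRingType) n (d : 'I_n -> nat)
    (B : forall i j : 'I_n, 'M[R]_(d i, d j)) (y : 'cV_(\sum_i d i)) :
  mxform (\mxblock_(i < n, j < n) B i j) y y =
  \sum_(i < n) \sum_(j < n) mxform (B i j) (submxcol y i) (submxcol y j).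
Proof.
rewrite /mxform -[y in LHS]submxcolK tr_mxcol mul_mxrow_mxblock.
rewrite mul_mxrow_mxcol summxE exchange_big; apply: eq_bigr => j _.
by rewrite mulmx_suml summxE.
Qed.

Lemma posmx_mxform_ge0 (R : realFieldType) m (M : 'M[R]_m) y :
  posmx M -> 0 <= mxform M y y.
Proof.
move=> M_pos; have [->|y_neq0] := eqVneq y 0; first by rewrite /mxform mulmx0 mxE.
exact/ltW/M_pos.
Qed.

Lemma submxcol_neq0 (R : pzRingType) n (d : 'I_n -> nat) m (y : 'M[R]_(\sum_i d i, m)) :
  y != 0 -> exists i, submxcol y i != 0.
Proof.
move=> y_neq0; apply/existsP; apply: contraNT y_neq0 => /existsPn y0.
by apply/eqP/mxcolP => i; rewrite submxcol0; apply/eqP/negbNE/y0.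
Qed.

Section TridiagonalSums.

Variables (V : nmodType) (F : nat -> nat -> V).

Definition tridiag_upto N := forall a b, (a <= N)%N -> (b <= N)%N ->
  (a.+1 < b)%N || (b.+1 < a)%N -> F a b = 0.

Lemma sumr_tridiag N : tridiag_upto N ->
  \sum_(a < N.+1) \sum_(b < N.+1) F a b =
  \sum_(a < N.+1) F a a + \sum_(a < N) (F a a.+1 + F a.+1 a).
Proof.
elim: N => [|M IH] F0; first by rewrite !big_ord1 big_ord0 addr0.
have col_last : \sum_(a < M.+1) F a M.+1 = F M M.+1.
  rewrite big_ord_recr /= big1 ?add0r // => a _.
  by apply: F0; have := ltn_ord a; lia.
have row_last : \sum_(b < M.+1) F M.+1 b = F M.+1 M.
  rewrite big_ord_recr /= big1 ?add0r // => b _.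
  by apply: F0; have := ltn_ord b; lia.
rewrite big_ord_recr /=; under eq_bigr do rewrite big_ord_recr /=.
rewrite big_split /= IH => [|a b ha hb]; last by apply: F0; apply: leqW.
rewrite col_last [\sum_(b < M.+2) _]big_ord_recr row_last.
rewrite [in RHS](big_ord_recr M.+1) [\sum_(a < M.+1) (_ + _)]big_ord_recr /=.
by rewrite -!addrA; congr (_ + _); rewrite [RHS]addrCA; congr (_ + _); rewrite addrA addrC.
Qed.

Lemma sumr_diag_double N :
  (\sum_(a < N.+1) F a a) *+ 2 =
  \sum_(k < N) (F k k + F k.+1 k.+1) + (F 0 0 + F N N).
Proof.
rewrite mulr2n {1}big_ord_recr big_ord_recl big_split /=.
by rewrite [F 0 0 + _]addrC addrACA [F N N + _]addrC.
Qed.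

Lemma sumr_tridiag_double N : tridiag_upto N ->
  (\sum_(a < N.+1) \sum_(b < N.+1) F a b) *+ 2 =
  \sum_(k < N) (F k k + F k k.+1 *+ 2 + F k.+1 k *+ 2 + F k.+1 k.+1) +
  (F 0 0 + F N N).
Proof.
move=> F_tridiag; rewrite sumr_tridiag // mulrnDl sumr_diag_double -sumrMnl.
rewrite addrAC -big_split /=; congr (_ + _); apply: eq_bigr => k _.
by rewrite mulrnDl addrA [_ + F k.+1 k.+1 + _]addrAC addrAC.
Qed.

End TridiagonalSums.

Lemma sumr_gt0 (R : numDomainType) (I : finType) (F : I -> R) i :
  (forall j, 0 <= F j) -> 0 < F i -> 0 < \sum_j F j.
Proof.
by move=> F_ge0 Fi_gt0; rewrite (bigD1 i) //=; apply: ltr_wpDr => //; exact: sumr_ge0.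
Qed.

Theorem mainTheorem7 (R : realFieldType) (n : nat) (hn : (2 <= n)%N)
  (d : 'I_n -> nat) (B : forall i j : 'I_n, 'M[R]_(d i, d j))
  (htri : block_tridiag B)
  (h1 : forall i : 'I_n, val i = 0%N -> posmx (B i i))
  (hn' : forall i : 'I_n, val i = n.-1 -> posmx (B i i))
  (hpair : forall i j : 'I_n, val j = (val i).+1 ->
     posmx (block_mx (B i i) (2%:R *: B i j) (2%:R *: B j i) (B j j))) :
  posmx (blockmx B).
Proof.
case: n hn d B htri h1 hn' hpair => [|[|N]] // _ d B htri h1 hn' hpair y y_neq0.
pose yb k := submxcol y (inord k : 'I_N.+2).
pose F a b := mxform (B (inord a) (inord b)) (yb a) (yb b).
pose w k := col_mx (yb k) (yb k.+1).
pose pair_mx k := block_mx (B (inord k) (inord k)) (2%:R *: B (inord k) (inord k.+1))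
  (2%:R *: B (inord k.+1) (inord k)) (B (inord k.+1) (inord k.+1)).
have pair_form k : F k k + F k k.+1 *+ 2 + F k.+1 k *+ 2 + F k.+1 k.+1 =
    mxform (pair_mx k) (w k) (w k).
  by rewrite mxform_block !mxformZ !mulr_natl.
have pair_pos (k : 'I_N.+1) : posmx (pair_mx k).
  by have k_lt := ltn_ord k; apply: hpair; rewrite /= !inordK //; lia.
have yAy : mxform (blockmx B) y y = \sum_(a < N.+2) \sum_(b < N.+2) F a b.
  rewrite mxform_mxblock; apply: eq_bigr => i _; apply: eq_bigr => j _.
  by rewrite /F /yb !inord_val.
change (0 < mxform (blockmx B) y y).
rewrite -(pmulrn_lgt0 _ (isT : (0 < 2)%N)) yAy sumr_tridiag_double; last first.
  by move=> a b ha hb ab_far; rewrite /F htri ?mxform0 // !inordK.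
have [i yi_neq0] := submxcol_neq0 y_neq0.
have [k wk_neq0] : exists k : 'I_N.+1, w k != 0.
  case: (ltnP i N.+1) => [i_lt | i_ge].
    by exists (Ordinal i_lt); rewrite col_mx_eq0 /yb /= inord_val negb_and yi_neq0.
  exists ord_max; rewrite col_mx_eq0 /yb /= negb_and orbC.
  have -> : inord N.+1 = i by apply: ord_inj; rewrite inordK //; have := ltn_ord i; lia.
  by rewrite yi_neq0.
apply: ltr_wpDr.
  by rewrite addr_ge0 // posmx_mxform_ge0 //; [apply: h1 | apply: hn']; rewrite /= inordK.
apply: (@sumr_gt0 _ _ _ k) => [j|]; rewrite pair_form; last exact: pair_pos.
exact: posmx_mxform_ge0.
Qed.
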